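(* Let $\{\mathcal B_n\}_{n\in\omega}$ be an entwined family and $\mathcal H_n:=\mathbb H[\mathcal B_{n-1}]_n$ for $n\ge1$. Let $\sigma$ be an initial type. If either $n>\mathrm{order}(\sigma)$, or $n=\mathrm{order}(\sigma)$ and $\sigma$ is inactive, then $\mathcal H_n[\sigma]$ is a finite set.
   Context: Standing assumptions. $\Sigma_{\mathrm{bg}}$ is a first-order signature with a distinguished sort $W$ and a binary relation symbol $\le$ on $W$. All other sorts are written $S$ and are interpreted by a fixed structure $\mathcal A$ as finite sets. $\le$ is interpreted in $\mathcal A$ as a total order. $\Sigma_{\mathrm{fg}}$ is a finite set of higher-order predicate symbols, disjoint from $\Sigma_{\mathrm{bg}}$, each of initial type. $l:=\max\{\mathrm{order}(\rho)\mid X:\rho\in\Sigma_{\mathrm{fg}}\}$. For $i\ge1$, $\Sigma_i\subseteq\Sigma_{\mathrm{fg}}$ consists of the symbols whose type has order at most $i$. Types. Relational types are $\rho::=o\mid\sigma\to\rho$ and argument types are $\sigma::=S\mid W\mid\rho$. The order is given by $\mathrm{order}(S)=\mathrm{order}(W)=\mathrm{order}(o)=0$ and $\mathrm{order}(\sigma\to\tau)=\max(\mathrm{order}(\sigma)+1,\mathrm{order}(\tau))$. Initial types. A type $\sigma_1\to\cdots\to\sigma_n\to o$ is initial if: (O1) at most one $\sigma_j$ is $W$; (O2) if $\sigma_j=W$, then $\mathrm{order}(\sigma_i)<\mathrm{order}(\sigma_j\to\cdots\to\sigma_n\to o)$ for all $i<j$; (O3) each $\sigma_j$ is $S$, $W$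 or initial. It is active if some $\sigma_i=W$, and inactive otherwise. Active types are written $\xi$ and inactive ones $\nu$. Frames and structures. A frame $\mathcal H$ assigns to each type a set: $\mathcal H[S]=\mathcal A[S]$, $\mathcal H[W]=\mathcal A[W]$, $\mathcal H[o]=\mathbb B=\{0,1\}$, and $\mathcal H[\sigma_1\to\sigma_2]\subseteq[\mathcal H[\sigma_1]\to\mathcal H[\sigma_2]]$, where $[A\to B]$ is the set of all functions. $\mathcal S$ is the standard frame, using full function spaces. For $\Xi\subseteq\Sigma_{\mathrm{fg}}$, a $(\Xi,\mathcal H)$-structure $\mathcal B$ extends $\mathcal A$ by an element $X^{\mathcal B}\in\mathcal H[\rho]$ for each $X:\rho\in\Xi$. A $(\Xi_2,\mathcal H_2)$-structure $\mathcal B_2$ is an expansion of a $(\Xi_1,\mathcal H_1)$-structure $\mathcal B_1$ (with $\Xi_1\subseteq\Xi_2$) if $c^{\mathcal B_2}=c^{\mathcal B_1}$ for all $c\in\Xi_1$. Ordering on relations. $\le_o$ on $[U_n\to\cdots\to U_1\to\mathbb B]$ is defined by: $f\le_o g$ iff ($f=0$ or $g=1$) when $n=0$, and iff $f(x)\le_o g(x)$ for all $x$ otherwise. $\top$ is the constantly-$1$ relation. Entwined frame. For $n\ge1$ and a $(\Xi,\mathcal H)$-structure $\mathcal B$, $\mathbb H[\mathcal B]_n$ is defined by cases on $\sigma$: (i) If $\sigma$ is initial with $\mathrm{order}(\sigma)\le n-2$, or $\sigma$ is inactive, $S$, $W$ or $o$ with $\mathrm{order}(\sigma)\le n-1$: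 $\mathbb H[\mathcal B]_n[\sigma]:=\mathcal H[\sigma]$. (ii) If $\sigma$ is active with $\mathrm{order}(\sigma)=n-1$: $\mathbb H[\mathcal B]_n[W\to\nu]:=\{\top\}\cup\{X^{\mathcal B}\,\overline s\mid X:\overline\tau\to W\to\nu\in\Xi,\ s_i\in\mathcal H[\tau_i]\}$, and $\mathbb H[\mathcal B]_n[\sigma_1\to\xi]:=[\mathbb H[\mathcal B]_n[\sigma_1]\to\mathbb H[\mathcal B]_n[\xi]]$. (iii) If $\sigma$ is initial with $\mathrm{order}(\sigma)=n$: $\mathbb H[\mathcal B]_n[W\to\nu]:=\{f\in[\mathcal A[W]\to\mathbb H[\mathcal B]_n[\nu]]\mid\forall z\le^{\mathcal A}z'.\ f(z)\le_o f(z')\}$, and $\mathbb H[\mathcal B]_n[\sigma_1\to\sigma_2]:=[\mathbb H[\mathcal B]_n[\sigma_1]\to\mathbb H[\mathcal B]_n[\sigma_2]]$ for $\sigma_1\ne W$. (iv) Otherwise (non-initial, or order $>n$): full function space $[\mathbb H[\mathcal B]_n[\sigma_1]\to\mathbb H[\mathcal B]_n[\sigma_2]]$. Entwined family. $\{\mathcal B_n\}_{n\in\omega}$ is entwined if $\mathcal B_0$ is the unique $(\emptyset,\mathcal S)$-structure and each $\mathcal B_{n+1}$ is a $(\Sigma_{n+1},\mathbb H[\mathcal B_n]_{n+1})$-expansion of $\mathcal B_n$. An entwined structure is a member of some entwined family. *)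

From mathcomp Require Import all_boot.
From Stdlib Require List.


(* Types.  [TS s] is a background sort S, [TW] the distinguished sort W,     *)
(* [To] is o and [Tarr a b] is a -> b.                                       *)
Inductive hty (sort : Type) : Type :=
  | TS of sort
  | TW
  | To
  | Tarr of hty sort & hty sort.
Arguments TS {sort}.
Arguments TW {sort}.
Arguments To {sort}.
Arguments Tarr {sort}.

Section Types.
Variable sort : Type.
Notation ty := (hty sort).

Fixpoint tyorder (t : ty) : nat :=
  match t with
  | Tarr a b => maxn (tyorder a).+1 (tyorder b)
  | _ => 0
  end.

Fixpoint isrel (t : ty) : bool :=
  match t with
  | To => true
  | Tarr _ b => isrel b
  | _ => false
  end.

Fixpoint args (t : ty) : seq ty :=
  match t with
  | Tarr a b => a :: args b
  | _ => [::]
  end.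

Definition mkrel (l : seq ty) : ty := foldr Tarr To l.

Definition isS (t : ty) : bool := if t is TS _ then true else false.
Definition isW (t : ty) : bool := if t is TW then true else false.
Definition isbase (t : ty) : bool :=
  match t with TS _ | TW | To => true | _ => false end.

Definition O1 (l : seq ty) : bool := count isW l <= 1.

Definition O2b (l : seq ty) : bool :=
  [forall j : 'I_(size l), isW (nth To l j) ==>
     [forall i : 'I_(size l), (i < j) ==>
        (tyorder (nth To l i) < tyorder (mkrel (drop j l)))]].

Fixpoint initial (t : ty) : bool :=
  [&& isrel t, O1 (args t), O2b (args t) &
     (fix go (u : ty) : bool :=
        match u with
        | Tarr a b => (isS a || isW a || initial a) && go b
        | _ => true
        end) t].

Definition active (t : ty) : bool := initial t && has isW (args t).
Definition inactive (t : ty) : bool := initial t && ~~ has isW (args t).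

End Types.

Arguments tyorder {sort}.
Arguments isrel {sort}.
Arguments args {sort}.
Arguments mkrel {sort}.
Arguments isS {sort}.
Arguments isW {sort}.
Arguments isbase {sort}.
Arguments O1 {sort}.
Arguments O2b {sort}.
Arguments initial {sort}.
Arguments active {sort}.
Arguments inactive {sort}.

(* Semantics.  All frames live inside a common ambient domain [Sem t]:       *)
(* a function from a set U to a set V is represented by its graph, a         *)
(* relation [Sem a -> Sem b -> Prop]; a frame is a family of predicates      *)
(* (sets) [H t : Sem t -> Prop].                                             *)
Section Semantics.
Variable sort : Type.
Variable AS : sort -> Type.
Variable AW : Type.
Variable leW : AW -> AW -> Prop.
Notation ty := (hty sort).

Fixpoint Sem (t : ty) : Type :=
  match t with
  | TS s => AS s
  | TW => AW
  | To => bool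
  | Tarr a b => Sem a -> Sem b -> Prop
  end.

Definition isfun (a b : ty) (U : Sem a -> Prop) (V : Sem b -> Prop)
  (f : Sem a -> Sem b -> Prop) : Prop :=
  (forall x y, f x y -> U x /\ V y) /\
  (forall x, U x -> exists y, f x y /\ forall y', f x y' -> y' = y).

Definition frame := forall t : ty, Sem t -> Prop.

Definition is_frame (H : frame) : Prop :=
  (forall s (x : Sem (TS s)), H (TS s) x) /\
  (forall x : Sem TW, H TW x) /\
  (forall x : Sem To, H To x) /\
  (forall a b (f : Sem (Tarr a b)), H (Tarr a b) f -> isfun a b (H a) (H b) f).

Fixpoint std (t : ty) : Sem t -> Prop :=
  match t as t0 return Sem t0 -> Prop with
  | Tarr a b => fun f => isfun a b (std a) (std b) f
  | _ => fun _ => True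
  end.

Fixpoint leo (t : ty) : Sem t -> Sem t -> Prop :=
  match t as t0 return Sem t0 -> Sem t0 -> Prop with
  | To => fun f g => f = false \/ g = true
  | Tarr a b => fun f g => forall x y y', f x y -> g x y' -> leo b y y'
  | _ => fun f g => f = g
  end.

Fixpoint is_top (H : frame) (t : ty) : Sem t -> Prop :=
  match t as t0 return Sem t0 -> Prop with
  | To => fun f => f = true
  | Tarr a b => fun f => forall x y, f x y <-> (H a x /\ is_top H b y)
  | _ => fun _ => False
  end.

(* [reach H u t g f] : u = tau_1 -> ... -> tau_k -> t and
   f = g s_1 ... s_k for some s_i in H[tau_i] *)
Fixpoint reach (H : frame) (u t : ty) : Sem u -> Sem t -> Prop :=
  match u as u0 return Sem u0 -> Sem t -> Prop with
  | Tarr a b => fun g f =>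
      (exists e : Tarr a b = t, eq_rect _ Sem g _ e = f) \/
      (exists s, H a s /\ exists g', g s g' /\ reach H b t g' f)
  | u0 => fun g f => exists e : u0 = t, eq_rect _ Sem g _ e = f
  end.

Variable fsym : finType.
Variable fty : fsym -> ty.

(* A (Xi, H)-structure extending A: the background part is fixed; it is
   given by its frame, its set of symbols Xi and an interpretation of the
   symbols (only the values on Xi matter). *)
Record structure := Structure {
  sframe : frame;
  sdom : pred fsym;
  sitp : forall X : fsym, Sem (fty X)
}.

Definition is_structure (Xi : pred fsym) (H : frame) (B : structure) : Prop :=
  is_frame H /\ sframe B = H /\ sdom B =1 Xi /\
  (forall X, Xi X -> H (fty X) (sitp B X)).

Definition is_expansion (B2 B1 : structure) : Prop :=
  {subset sdom B1 <= sdom B2} /\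
  (forall X, sdom B1 X -> sitp B2 X = sitp B1 X).

Definition Sigma (i : nat) : pred fsym := fun X => tyorder (fty X) <= i.

Fixpoint EH (B : structure) (n : nat) (t : ty) {struct t} : Sem t -> Prop :=
  let H := sframe B in
  if (initial t && (tyorder t + 2 <= n)) ||
     ((inactive t || isbase t) && (tyorder t + 1 <= n))
  then H t
  else if active t && (tyorder t + 1 == n) then
    match t as t0 return Sem t0 -> Prop with
    | Tarr a b =>
        let Ea := EH B n a in
        let Eb := EH B n b in
        match a as a0 return (Sem a0 -> Prop) -> Sem (Tarr a0 b) -> Prop with
        | TW => fun _ f =>
            is_top H (Tarr TW b) f \/
            exists X, sdom B X /\ reach H (fty X) (Tarr TW b) (sitp B X) f
        | a0 => fun Ea0 f => isfun a0 b Ea0 Eb f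
        end Ea
    | _ => fun _ => True
    end
  else if initial t && (tyorder t == n) then
    match t as t0 return Sem t0 -> Prop with
    | Tarr a b =>
        let Ea := EH B n a in
        let Eb := EH B n b in
        match a as a0 return (Sem a0 -> Prop) -> Sem (Tarr a0 b) -> Prop with
        | TW => fun _ f =>
            isfun TW b (fun _ : AW => True) Eb f /\
            (forall z z' y y', leW z z' -> f z y -> f z' y' -> leo b y y')
        | a0 => fun Ea0 f => isfun a0 b Ea0 Eb f
        end Ea
    | _ => fun _ => True
    end
  else
    match t as t0 return Sem t0 -> Prop with
    | Tarr a b => fun f => isfun a b (EH B n a) (EH B n b) f
    | _ => fun _ => True
    end.

Definition entwined (Bs : nat -> structure) : Prop :=
  is_structure (fun _ => false) std (Bs 0) /\
  forall n, is_structure (Sigma n.+1) (EH (Bs n) n.+1) (Bs n.+1) /\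
            is_expansion (Bs n.+1) (Bs n).

End Semantics.

Arguments structure {sort} AS AW {fsym} fty.
Arguments EH {sort AS AW} leW {fsym fty} B n t.
Arguments entwined {sort AS AW} leW {fsym fty} Bs.

Definition finite_set (T : Type) (P : T -> Prop) : Prop :=
  exists l : list T, forall x, P x -> List.In x l.

Definition is_total_order (T : Type) (le : T -> T -> Prop) : Prop :=
  (forall x, le x x) /\ (forall x y, le x y -> le y x -> x = y) /\
  (forall x y z, le x y -> le y z -> le x z) /\ (forall x y, le x y \/ le y x).

Arguments finite_set {T} P.
Arguments is_total_order {T} le.

(* The proof is by strong induction on n and, inside, by structural
   induction on sigma, following the clauses of the definition of H[B]_n:
   - clause (i) returns the frame of B_{n-1}, which is H_{n-1} itself; the
     type is admissible for n-1, so the outer induction hypothesis applies;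
   - clause (ii) for W -> nu yields the top relation together with the
     partial applications X^B s of finitely many symbols; by (O2) every
     argument s preceding W ranges over a domain of smaller order, which is
     finite by the outer induction hypothesis;
   - the remaining clauses for sigma_1 -> sigma_2 with sigma_1 <> W are
     (subsets of) function spaces between finite sets, hence finite. *)
From mathcomp Require Import all_boot zify.
From Stdlib Require List.
From Stdlib Require Import Classical FunctionalExtensionality PropExtensionality ProofIrrelevance.

Set Implicit Arguments.
Unset Strict Implicit.

Section FiniteSets.

Lemma fin_sub (T : Type) (P Q : T -> Prop) :
  (forall x, P x -> Q x) -> finite_set Q -> finite_set P.
Proof. by move=> PQ [l hl]; exists l => x /PQ /hl. Qed.

Lemma fin_empty (T : Type) (P : T -> Prop) : (forall x, ~ P x) -> finite_set P.
Proof. by move=> h; exists nil => x /h. Qed.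

Lemma fin_subsingleton (T : Type) (P : T -> Prop) :
  (forall x y, P x -> P y -> x = y) -> finite_set P.
Proof.
move=> h; case: (classic (exists x, P x)) => [[x px]|nx].
  by exists (x :: nil) => y py; left; apply: h.
by apply: fin_empty => x px; apply: nx; exists x.
Qed.

Lemma fin_or (T : Type) (P Q : T -> Prop) :
  finite_set P -> finite_set Q -> finite_set (fun x => P x \/ Q x).
Proof.
move=> [l1 h1] [l2 h2]; exists (List.app l1 l2) => x [/h1|/h2] h;
  apply: List.in_or_app; tauto.
Qed.

Lemma fin_union (I T : Type) (l : list I) (P : I -> T -> Prop) :
  (forall i, List.In i l -> finite_set (P i)) ->
  finite_set (fun x => exists i, List.In i l /\ P i x).
Proof.
elim: l => [|i l IH] h; first by apply: fin_empty => x [i [[] _]].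
apply: (@fin_sub _ _ (fun x => P i x \/ exists j, List.In j l /\ P j x)).
  by move=> x [j [[<-|hj] pj]]; [left|right; exists j].
by apply: fin_or; [apply: h; left|apply: IH => j hj; apply: h; right].
Qed.

Lemma in_enum (T : finType) (x : T) : List.In x (enum T).
Proof.
have : x \in enum T by rewrite mem_enum.
elim: (enum T) => //= y l IH; rewrite in_cons => /orP [/eqP ->|/IH]; tauto.
Qed.

Fixpoint sublists (T : Type) (l : list T) : list (list T) :=
  match l with
  | nil => nil :: nil
  | cons p l => List.app (sublists l) (List.map (cons p) (sublists l))
  end.

Lemma sublistsP (T : Type) (l : list T) (R : T -> Prop) :
  exists ps, List.In ps (sublists l) /\
             forall p, List.In p ps <-> (List.In p l /\ R p).
Proof.
elim: l => [|a l [ps [h1 h2]]] /=.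
  by exists nil; split; [left|move=> p; split=> [[]|[[] _]]].
case: (classic (R a)) => ra.
  exists (a :: ps); split; first by apply: List.in_or_app; right; apply: List.in_map.
  by move=> p /=; rewrite h2; split; [move=> [<-|[]]|move=> [[<-|hp] rp]]; tauto.
exists ps; split; first by apply: List.in_or_app; left.
by move=> p; rewrite h2; split; [|move=> [[<-|hp] rp]]; tauto.
Qed.

(* Relations between two finite sets form a finite set (using extensionality
   to identify a relation with its graph). *)
Lemma fin_rel (A B : Type) (U : A -> Prop) (V : B -> Prop) :
  finite_set U -> finite_set V ->
  finite_set (fun f : A -> B -> Prop => forall x y, f x y -> U x /\ V y).
Proof.
move=> [lU hU] [lV hV].
exists (List.map (fun ps x y => List.In (x, y) ps) (sublists (List.list_prod lU lV))).
move=> f hf.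
have [ps [h1 h2]] := @sublistsP _ (List.list_prod lU lV) (fun p => f p.1 p.2).
suff -> : f = (fun x y => List.In (x, y) ps) by apply: List.in_map.
apply: functional_extensionality => x; apply: functional_extensionality => y.
apply: propositional_extensionality; rewrite h2 /=; split; last tauto.
move=> fxy; split=> //; case: (hf _ _ fxy) => ux vy.
by apply: List.in_prod; [apply: hU|apply: hV].
Qed.

End FiniteSets.

Section InitialTypes.
Variable sort : Type.
Notation ty := (hty sort).

(* The (O3) component of [initial], as a named fixpoint. *)
Fixpoint args_ok (u : ty) : bool :=
  match u with Tarr a b => (isS a || isW a || initial a) && args_ok b | _ => true end.

Lemma initialE (t : ty) :
  initial t = [&& isrel t, O1 (args t), O2b (args t) & args_ok t].
Proof. by case: t. Qed.

Lemma initial_rel (t : ty) : initial t -> isrel t.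
Proof. by rewrite initialE => /and4P []. Qed.

Lemma O2b_cons (a : ty) l : O2b (a :: l) -> O2b l.
Proof.
move=> /forallP h; apply/forallP => j; apply/implyP => wj; apply/forallP => i.
apply/implyP => ij.
move: (h (Ordinal (ltn_ord j : j.+1 < size (a :: l)))).
move=> /implyP /(_ wj) /forallP /(_ (Ordinal (ltn_ord i : i.+1 < size (a :: l)))).
by move=> /implyP; apply.
Qed.

Lemma O2b_head (a : ty) l j : O2b (a :: l) -> j < size l -> nth To l j = TW ->
  tyorder a < tyorder (mkrel (drop j l)).
Proof.
move=> /forallP h hj wj.
move: (h (Ordinal (hj : j.+1 < size (a :: l)))).
rewrite /= wj /= => /forallP /(_ (Ordinal (isT : 0 < size (a :: l)))).
by move=> /implyP; apply.
Qed.

Lemma initial_tail (a b : ty) : initial (Tarr a b) -> initial b.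
Proof.
rewrite initialE (initialE b) /= => /and4P [-> o1 o2 /andP [_ ->]].
rewrite (O2b_cons o2) andbT /= andbT.
by move: o1; rewrite /O1 /=; case: (isW a) => //= /ltnW.
Qed.

Lemma initial_arg (a b : ty) : initial (Tarr a b) -> isS a || isW a || initial a.
Proof. by rewrite initialE => /and4P [_ _ _ /andP []]. Qed.

Lemma inactive_tail (a b : ty) : inactive (Tarr a b) -> inactive b.
Proof.
rewrite /inactive /= => /andP [/initial_tail -> /=].
by rewrite negb_or => /andP [].
Qed.

Lemma mkrel_args (t : ty) : isrel t -> mkrel (args t) = t.
Proof. by elim: t => //= a _ b IH /IH ->. Qed.

Fixpoint result_of (t u : ty) : Prop :=
  u = t \/ match u with Tarr _ b => result_of t b | _ => False end.

Lemma result_of_args (b0 c : ty) : result_of (Tarr TW b0) c ->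
  exists j, [/\ j < size (args c), nth To (args c) j = TW &
                drop j (args c) = TW :: args b0].
Proof.
elim: c => [s|||a _ c IH] /=; try by move=> [|[]].
by move=> [[-> ->]|/IH [j [h1 h2 h3]]]; [exists 0|exists j.+1].
Qed.

(* Types over which the arguments of initial types range, W excepted. *)
Definition argtype (t : ty) : bool := isS t || initial t.

Definition admissible (n : nat) (t : ty) : Prop :=
  tyorder t < n \/ (tyorder t = n /\ inactive t).

Lemma admissible_arg n (a b : ty) : admissible n (Tarr a b) -> tyorder a < n.
Proof. by rewrite /admissible /= => -[|[<- _]]; lia. Qed.

Lemma admissible_tail n (a b : ty) : admissible n (Tarr a b) -> admissible n b.
Proof.
rewrite /admissible /= => -[h|[h hin]]; first by left; lia.
have [e|ne] := eqVneq (tyorder b) n; last by left; lia.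
by right; split=> //; apply: inactive_tail hin.
Qed.

End InitialTypes.

Section PartialApplications.
Variables (sort : Type) (AS : sort -> Type) (AW : Type).
Notation ty := (hty sort).
Notation Sm := (Sem sort AS AW).
Notation frm := (frame sort AS AW).
Local Notation reach := (reach sort AS AW).
Local Notation is_top := (is_top sort AS AW).
Local Notation isfun := (isfun sort AS AW).

Lemma fin_isfun (a b : ty) U V : finite_set U -> finite_set V ->
  finite_set (isfun a b U V).
Proof. by move=> hU hV; apply: (fin_sub _ (fin_rel hU hV)) => f []. Qed.

Lemma is_top_uniq (H : frm) (t : ty) f g : is_top H t f -> is_top H t g -> f = g.
Proof.
case: t f g => [s|||a b] f g //=; first by move=> -> ->.
move=> hf hg; apply: functional_extensionality => x.
apply: functional_extensionality => y.
by apply: propositional_extensionality; rewrite hf hg.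
Qed.

(* The transport of g to type t is unique, whatever the equation used. *)
Lemma fin_cast (u t : ty) (g : Sm u) :
  finite_set (fun f : Sm t => exists e : u = t, eq_rect u Sm g t e = f).
Proof.
apply: fin_subsingleton => x y [e1 <-] [e2 <-].
by rewrite (proof_irrelevance _ e1 e2).
Qed.

Lemma reach_result_of (H : frm) (t : ty) u g f : reach H u t g f -> result_of t u.
Proof.
elim: u g => [s|||a _ b IH] g /=; try by move=> [e _]; left.
by move=> [[e _]|[s [_ [g' [_ /IH r]]]]]; [left|right].
Qed.

Fixpoint earlier_fin (H : frm) (t u : ty) : Prop :=
  match u with
  | Tarr a b => (result_of t b -> finite_set (H a)) /\ earlier_fin H t b
  | _ => True
  end.

Lemma reach_fin (H : frm) (t : ty) : is_frame sort AS AW H ->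
  forall u g, H u g -> earlier_fin H t u -> finite_set (reach H u t g).
Proof.
move=> hH; elim=> [s|||a _ b IH] g hg /=; try by move=> _; apply: fin_cast.
move=> [hq qb]; apply: fin_or; first exact: fin_cast.
case: (classic (result_of t b)) => sb; last first.
  by apply: fin_empty => f [s [_ [g' [_ /reach_result_of]]]].
have [la hla] := hq sb.
apply: (@fin_sub _ _ (fun f => exists s, List.In s la /\
   (H a s /\ exists g', g s g' /\ reach H b t g' f))).
  by move=> f [s [hs r]]; exists s; split; [apply: hla|].
apply: fin_union => s _.
case: (classic (H a s)) => has; last by apply: fin_empty => f [].
have [gdom gtot] := hH.2.2.2 _ _ _ hg.
have [y [gy uy]] := gtot _ has.
apply: (@fin_sub _ _ (reach H b t y)); last exact: IH (gdom _ _ gy).2 qb.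
by move=> f [_ [g' [gg' r]]]; rewrite -(uy _ gg').
Qed.

(* By (O2), in an initial type the arguments preceding a result W -> b0 have
   order below that of W -> b0 (and they are not W, by (O1)); so finiteness
   of the frame below that order gives the hypothesis of [reach_fin]. *)
Lemma earlier_fin_initial (H : frm) (b0 : ty) :
  (forall a, argtype a -> tyorder a < tyorder (Tarr TW b0) -> finite_set (H a)) ->
  isrel b0 -> forall u, initial u -> earlier_fin H (Tarr TW b0) u.
Proof.
move=> hfin rb0; elim=> [s|||a _ c IH] //= hu.
split; last exact: IH (initial_tail hu).
move=> /result_of_args [j [hj wj dj]].
have := hu; rewrite initialE /= => /and4P [_ o1 o2 _].
have ho := O2b_head o2 hj wj.
rewrite dj /= (mkrel_args rb0) in ho.
apply: hfin (ho); rewrite /argtype.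
move: (initial_arg hu); case: a {hu} o1 o2 ho => //= o1 _ _ _.
move: o1; rewrite /O1 /= ltnS leqn0 => /eqP c0.
have : has isW (args c) by apply/(has_nthP To); exists j => //; rewrite wj.
by rewrite has_count c0.
Qed.

End PartialApplications.

Section EntwinedFrame.
Variables (sort : Type) (AS : sort -> Type) (AW : Type) (leW : AW -> AW -> Prop)
  (fsym : finType) (fty : fsym -> hty sort).
Notation ty := (hty sort).
Notation structure := (structure AS AW fty).
Local Notation sframe := (sframe sort AS AW fsym fty).
Local Notation sdom := (sdom sort AS AW fsym fty).
Local Notation sitp := (sitp sort AS AW fsym fty).

Definition clause_i (n : nat) (t : ty) : bool :=
  (initial t && (tyorder t + 2 <= n)) ||
  ((inactive t || isbase t) && (tyorder t + 1 <= n)).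

Lemma EH_clause_i (B : structure) n t :
  clause_i n t -> EH leW B n t = sframe B t.
Proof. by rewrite /clause_i; case: t => [s|||a b] /= ->. Qed.

Lemma EH_active_W (B : structure) n b f :
  active (Tarr TW b) -> tyorder (Tarr TW b) + 1 = n ->
  EH leW B n (Tarr TW b) f ->
  is_top sort AS AW (sframe B) (Tarr TW b) f \/
  exists X, sdom B X /\
            reach sort AS AW (sframe B) (fty X) (Tarr TW b) (sitp B X) f.
Proof.
move=> hact hord; have [hI _] := andP hact.
have c1 : clause_i n (Tarr TW b) = false.
  by rewrite /clause_i /inactive hI -hord /= orbF; apply/negP; lia.
by move: c1; rewrite /clause_i => c1; cbn [EH]; rewrite c1 hact hord eqxx.
Qed.

Lemma EH_arrow_isfun (B : structure) n a b f :
  ~~ isW a -> ~~ clause_i n (Tarr a b) -> EH leW B n (Tarr a b) f ->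
  isfun sort AS AW a b (EH leW B n a) (EH leW B n b) f.
Proof.
rewrite /clause_i => nw /negbTE c1; cbn [EH]; rewrite c1.
move: (EH leW B n a) f => Ea; clear c1.
by case: a nw Ea => //= [s||a1 a2] _ Ea f; do 2?case: ifP => _.
Qed.

Lemma clause_i_admissible n (t : ty) :
  0 < tyorder t -> clause_i n t -> 1 < n /\ admissible n.-1 t.
Proof.
move=> o1 /orP [/andP [_ h]|/andP [hin h]]; first by split; [|left]; lia.
split; first by lia.
have [e|ne] := eqVneq (tyorder t) n.-1; last by left; lia.
by right; split=> //; case/orP: hin => // hb; case: t hb o1 {h e}.
Qed.

Variables (AS_fin : forall s, finite_set (fun _ : AS s => True))
  (fty_initial : forall X, initial (fty X))
  (Bs : nat -> structure)
  (Hent : entwined leW Bs).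

Lemma frame_ok m : is_frame sort AS AW (sframe (Bs m)).
Proof.
case: Hent => h0 hs; case: m => [|m]; first by case: h0 => h [-> _].
by case: (hs m) => [[h [-> _]] _].
Qed.

Lemma frame_succ m : sframe (Bs m.+1) = EH leW (Bs m) m.+1.
Proof. by case: Hent => _ hs; case: (hs m) => [[_ [-> _]] _]. Qed.

Lemma symbol_in_frame m X : sdom (Bs m.+1) X ->
  sframe (Bs m.+1) (fty X) (sitp (Bs m.+1) X).
Proof.
case: Hent => _ hs; case: (hs m) => [[_ [he [hd hi]]] _] hX.
by rewrite he; apply: hi; rewrite -hd.
Qed.

Lemma fin_sort m s : finite_set (sframe (Bs m) (TS s)).
Proof. by apply: (fin_sub _ (AS_fin s)). Qed.

Lemma EH_active_fin m b :
  active (Tarr TW b) -> tyorder (Tarr TW b) = m ->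
  (forall a, argtype a -> tyorder a < m -> finite_set (sframe (Bs m) a)) ->
  finite_set (EH leW (Bs m) m.+1 (Tarr TW b)).
Proof.
move=> hact hord hfin.
have [hI _] := andP hact.
have hord1 : tyorder (Tarr TW b) + 1 = m.+1 by rewrite hord addn1.
apply: (fin_sub (fun f => @EH_active_W _ _ _ f hact hord1)).
apply: fin_or; first by apply: fin_subsingleton => f g; apply: is_top_uniq.
apply: (@fin_sub _ _ (fun f => exists X, List.In X (enum fsym) /\
    (sdom (Bs m) X /\ reach sort AS AW (sframe (Bs m)) (fty X) (Tarr TW b)
                                       (sitp (Bs m) X) f))).
  by move=> f [X hX]; exists X; split=> //; apply: in_enum.
apply: fin_union => X _.
case: (classic (sdom (Bs m) X)) => hX; last by apply: fin_empty => f [].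
apply: (fin_sub (fun f (h : _ /\ _) => h.2)).
case: m hord hfin hX {hord1} => [|k] hord hfin hX; first by move: hord => /=; lia.
apply: reach_fin; [exact: frame_ok|exact: symbol_in_frame hX|].
apply: earlier_fin_initial => //; first by move=> a ha; rewrite hord; apply: hfin.
exact: initial_rel (initial_tail hI).
Qed.

Lemma EH_fin n : 0 < n -> forall t, argtype t -> admissible n t ->
  finite_set (EH leW (Bs n.-1) n t).
Proof.
elim/ltn_ind: n => n IHn hn.
(* the frame of B_{n-1} is H_{n-1}, to which the induction hypothesis applies *)
have prev_fin : 1 < n -> forall t, argtype t -> admissible n.-1 t ->
    finite_set (sframe (Bs n.-1) t).
  move=> n2 t ht ho; have e : n.-1 = n.-2.+1 by lia.
  rewrite e frame_succ; apply: (IHn n.-2.+1) => //; [lia|by rewrite -e].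
elim=> [s|||a IHa b IHb] ht ho.
- rewrite EH_clause_i; first exact: fin_sort.
  by rewrite /clause_i /= add0n.
- by [].
- by exists [:: true; false] => -[] _; [left|right; left].
have hI : initial (Tarr a b) by [].
have o1 : 0 < tyorder (Tarr a b) by rewrite /=; lia.
case: (boolP (clause_i n (Tarr a b))) => c1.
  have [n2 ho1] := clause_i_admissible o1 c1.
  by rewrite EH_clause_i //; apply: prev_fin.
have [ea|nw] : a = TW \/ ~~ isW a by case: a {IHa ht ho hI o1 c1}; [right|left|right|right].
- (* clause (ii): W -> b is active, of order n - 1 *)
  subst a; have hact : active (Tarr TW b) by rewrite /active hI.
  have hord : tyorder (Tarr TW b) < n /\ n <= tyorder (Tarr TW b) + 1.
    split; first by case: ho => [|[_ /andP [_ /negP []]]].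
    by move: c1; rewrite /clause_i hI /=; lia.
  have e : n = n.-1.+1 by lia.
  rewrite {2}e; apply: EH_active_fin => //; first by lia.
  by move=> a ha oa; apply: prev_fin => //; [lia|left].
- (* clauses (ii)-(iv) with a <> W: functions between finite sets *)
  apply: (fin_sub (fun f => EH_arrow_isfun nw c1)); apply: fin_isfun.
    apply: IHa; last by left; apply: admissible_arg ho.
    by move: (initial_arg hI) nw; rewrite /argtype; case: (isW a); rewrite ?orbF.
  apply: IHb; last exact: admissible_tail ho.
  by rewrite /argtype (initial_tail hI) orbT.
Qed.

End EntwinedFrame.

Theorem mainTheorem2
  (sort : Type) (AS : sort -> Type) (AW : Type) (leW : AW -> AW -> Prop)
  (AS_fin : forall s, finite_set (fun _ : AS s => True))
  (leW_total : is_total_order leW)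
  (fsym : finType) (fty : fsym -> hty sort)
  (fty_initial : forall X, initial (fty X))
  (Bs : nat -> structure AS AW fty)
  (Hent : entwined leW Bs)
  (n : nat) (sigma : hty sort) :
  0 < n -> initial sigma ->
  (tyorder sigma < n \/ (tyorder sigma = n /\ inactive sigma)) ->
  finite_set (EH leW (Bs n.-1) n sigma).
Proof.
move=> hn hi ho; apply: (EH_fin AS_fin fty_initial Hent hn) => //.
by rewrite /argtype hi orbT.
Qed.
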